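(* Let $H$ be a numerical semigroup, $k$ a field, $R=k[H]$ Gorenstein, $a=\mathrm{a}(R)$, and let $\mathcal{X}_R$ be the set of graded ideals $I$ of $R$ with $R/I$ Gorenstein and $\mu_R(I)\ge 2$. For $I\in\mathcal{X}_R$ set $J=t^{a-\mathrm{a}(R/I)}I\subseteq k[t,t^{-1}]$. Then: (1) $J\in\mathcal{X}_R$ and $\mathrm{a}(R/J)=2a-\mathrm{a}(R/I)$; hence if $\mathrm{a}(R/I)<a$ (resp. $>a$) then $\mathrm{a}(R/J)>a$ (resp. $<a$); (2) $\mathrm{a}(R/I)\in H$, $a\ne\mathrm{a}(R/I)$, and $a-\mathrm{a}(R/I)\in\mathbb{Z}\setminus H$; (3) if $\mathrm{a}(R/I)<a$ then $a-\mathrm{a}(R/I)\in\mathbb{N}\setminus H$; (4) if $\mathrm{a}(R/I)>a$ then $\mathrm{a}(R/I)-a\in\mathbb{N}\setminus H$.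
   Context: $R=k[H]=k[t^h\mid h\in H]\subseteq k[t]$ graded by $\deg t=1$; $\mathrm{a}(R)=\mathrm{c}(H)-1=\max(\mathbb{Z}\setminus H)$ where $\mathrm{c}(H)$ is the conductor of $H$; for an Artinian graded quotient $R/I$, $\mathrm{a}(R/I)$ is the largest $n$ with $[R/I]_n\ne 0$. $R$ Gorenstein is equivalent to $H$ symmetric. $\mu_R(I)$ is the minimal number of generators. *)

From HB Require Import structures.
From mathcomp Require Import all_boot all_order all_algebra.
Set Implicit Arguments. Unset Strict Implicit. Unset Printing Implicit Defensive.
Import Order.TTheory GRing.Theory Num.Theory.
Local Open Scope ring_scope.

Definition numerical_semigroup (H : pred nat) : Prop :=
  [/\ H 0%N, (forall m n, H m -> H n -> H (m + n)%N)
    & exists N, forall n, (N <= n)%N -> H n].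

Definition inHz (H : pred nat) (z : int) : bool := (0 <= z) && H (absz z).

(* a = a(R) = c(H) - 1 = max (Z \ H) *)
Definition a_inv_R (H : pred nat) (a : int) : Prop :=
  ~~ inHz H a /\ forall z : int, a < z -> inHz H z.

(* H symmetric (<=> R = k[H] Gorenstein), with a = max (Z \ H) *)
Definition symmetric_sg (H : pred nat) (a : int) : Prop :=
  forall z : int, inHz H z = ~~ inHz H (a - z).

(* R = k[H] = { f in k[t] | supp f included in H } *)
Definition inR (K : fieldType) (H : pred nat) (f : {poly K}) : Prop :=
  forall n, f`_n != 0 -> H n.

(* graded ideal of R (deg t = 1), as a subset of R *)
Definition graded_ideal (K : fieldType) (H : pred nat) (I : {poly K} -> Prop) : Prop :=
  [/\ forall f, I f -> inR H f,
      I 0,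
      forall f g, I f -> I g -> I (f + g),
      forall r f, inR H r -> I f -> I (r * f)
    & forall f n, I f -> I (f`_n *: 'X^n)].

Definition generated_by (K : fieldType) (H : pred nat) (I : {poly K} -> Prop)
  (gs : seq {poly K}) : Prop :=
  forall f, I f <-> exists rs : 'I_(size gs) -> {poly K},
      (forall i, inR H (rs i)) /\ f = \sum_(i < size gs) rs i * gs`_i.

Definition mu_ge (K : fieldType) (H : pred nat) (I : {poly K} -> Prop) (n : nat) : Prop :=
  forall gs, generated_by H I gs -> (n <= size gs)%N.

(* [R/I]_n <> 0 *)
Definition quot_deg_nonzero (K : fieldType) (H : pred nat) (I : {poly K} -> Prop)
  (n : nat) : Prop :=
  exists f : {poly K}, [/\ inR H f, f = f`_n *: 'X^n & ~ I f].

(* b = a(R/I) : the largest n with [R/I]_n <> 0 *)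
Definition a_quot (K : fieldType) (H : pred nat) (I : {poly K} -> Prop) (b : int) : Prop :=
  [/\ 0 <= b, quot_deg_nonzero H I (absz b)
    & forall n, quot_deg_nonzero H I n -> n%:Z <= b].

(* R/I Artinian: [R/I]_n = 0 for all large n *)
Definition artinian_quot (K : fieldType) (H : pred nat) (I : {poly K} -> Prop) : Prop :=
  exists N, forall n, (N <= n)%N -> H n -> I ('X^n).

Definition in_max_ideal (K : fieldType) (H : pred nat) (f : {poly K}) : Prop :=
  inR H f /\ f`_0 = 0.

(* f in R represents an element of the socle (0 :_{R/I} m) *)
Definition socle (K : fieldType) (H : pred nat) (I : {poly K} -> Prop) (f : {poly K}) : Prop :=
  inR H f /\ forall g, in_max_ideal H g -> I (g * f).

(* R/I is (Artinian) Gorenstein: Artinian (graded, local) with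
   dim_k Soc(R/I) = 1 *)
Definition gorenstein_quot (K : fieldType) (H : pred nat) (I : {poly K} -> Prop) : Prop :=
  artinian_quot H I /\
  exists f, [/\ socle H I f, ~ I f
              & forall g, socle H I g -> exists c : K, I (g - c *: f)].

Definition in_XR (K : fieldType) (H : pred nat) (I : {poly K} -> Prop) : Prop :=
  [/\ graded_ideal H I, gorenstein_quot H I & mu_ge H I 2].

Definition dpos (d : int) : nat := if 0 <= d then absz d else 0%N.
Definition dneg (d : int) : nat := if d < 0 then absz d else 0%N.

(* t^d I intersected with k[t]:  g with t^(d^-) g = t^(d^+) f, f in I *)
Definition shift_ideal (K : fieldType) (I : {poly K} -> Prop) (d : int) : {poly K} -> Prop :=
  fun g => exists f, I f /\ 'X^(dneg d) * g = 'X^(dpos d) * f.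

From HB Require Import structures.
From mathcomp Require Import all_boot all_order all_algebra zify.
From Stdlib Require Import Classical FunctionalExtensionality PropExtensionality.
Import Order.TTheory GRing.Theory Num.Theory.
Local Open Scope ring_scope.

(* Since [H] is symmetric, an ideal [I] of [R] with Gorenstein quotient and [b = a(R/I)]
   is determined by its monomials: a monomial [t^m] of [R] outside [I] can be pushed up,
   by multiplying with monomials of [R], to the one-dimensional socle, which sits in
   degree [b]; hence [b - m] lies in [H], and [t^m] is in [I] iff [b - m] is not in [H],
   i.e. iff [m + a - b] is in [H].  Thus [I = R ∩ t^(b-a) R].  Conversely, for [d] not in
   [H] the ideal [R ∩ t^(-d) R] has Gorenstein quotient with socle [t^(a-d)], and it is
   not principal when [-d] is not in [H] either.  Multiplication by [t^d] maps
   [R ∩ t^(-d) R] onto [R ∩ t^d R], so [J = t^(a-b) I] is again of this form with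
   [a - b] replaced by [b - a]; finally [b - a] is not in [H], as otherwise
   [I = t^(b-a) R] would be principal. *)

Section PolyFacts.
Context {K : fieldType}.
Implicit Types p q : {poly K}.

Lemma Xn_neq0 n : 'X^n != 0 :> {poly K}.
Proof. by rewrite -size_poly_eq0 size_polyXn. Qed.

Lemma coefD_neq0 p q i : (p + q)`_i != 0 -> (p`_i != 0) || (q`_i != 0).
Proof.
rewrite coefD; apply: contraNT; rewrite negb_or !negbK => /andP [/eqP -> /eqP ->].
by rewrite addr0.
Qed.

Lemma coefM_neq0 p q k : (p * q)`_k != 0 ->
  exists j, [/\ (j <= k)%N, p`_j != 0 & q`_(k - j) != 0].
Proof.
rewrite coefM => nz.
case: (boolP [exists j : 'I_k.+1, (p`_j != 0) && (q`_(k - j) != 0)]).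
  by move=> /existsP [j /andP [pj qj]]; exists j; split; rewrite // -ltnS.
move=> /existsPn none; move: nz; rewrite big1 ?eqxx // => j _.
by have := none j; rewrite negb_and !negbK => /orP [] /eqP ->; rewrite ?mul0r ?mulr0.
Qed.

Lemma Xn_drop_poly p e : (forall i, (i < e)%N -> p`_i = 0) -> 'X^e * drop_poly e p = p.
Proof.
move=> low; apply/polyP => i; rewrite coefXnM coef_drop_poly.
by case: ltnP => [/low ->|le]; rewrite ?subnK.
Qed.

Lemma poly_XnM_decomp p : p != 0 -> exists e q, p = 'X^e * q /\ q`_0 != 0.
Proof.
move=> nz; have ex : exists i, p`_i != 0.
  by exists (size p).-1; rewrite -/(lead_coef p) lead_coef_eq0.
case: (ex_minnP ex) => e pe emin; exists e, (drop_poly e p).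
split; last by rewrite coef_drop_poly add0n.
rewrite Xn_drop_poly // => i lt; apply/eqP; apply: contraTT lt => pi.
by rewrite -leqNgt; apply: emin.
Qed.

Lemma Xn_eq_mulXnM p q1 m e : 'X^m = p * ('X^e * q1) -> q1`_0 != 0 ->
  (e <= m)%N /\ p`_(m - e) != 0.
Proof.
move=> em q10.
have /poly_XnM_decomp [i [p1 [ep p10]]] : p != 0.
  by apply/eqP => p0; have := Xn_neq0 m; rewrite em p0 mul0r eqxx.
have : ('X^m : {poly K})`_(i + e) != 0.
  by rewrite em ep mulrACA -exprD coefXnM ltnn subnn coef0M mulf_neq0.
rewrite coefXn; have [<- _|_] := eqVneq (i + e)%N m; last by rewrite eqxx.
by rewrite leq_addl addnK ep coefXnM ltnn subnn.
Qed.

End PolyFacts.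

Section NumericalSemigroup.
Context {K : fieldType} {H : pred nat}.
Hypothesis hsg : numerical_semigroup H.

Lemma sg0 : H 0%N. Proof. by case: hsg. Qed.

Lemma sgD m n : H m -> H n -> H (m + n)%N. Proof. by case: hsg => _ + _; apply. Qed.

Lemma inHz_nat (n : nat) : inHz H n%:Z = H n. Proof. by []. Qed.

Lemma inHz_ge0 z : inHz H z -> 0 <= z. Proof. by case/andP. Qed.

Lemma inHzP z : inHz H z -> exists2 n, z = n%:Z & H n.
Proof. by case: z => n //= /andP [_ hn]; exists n. Qed.

Lemma inHzD x y : inHz H x -> inHz H y -> inHz H (x + y).
Proof. by move=> /inHzP [m -> hm] /inHzP [n -> hn]; rewrite -PoszD inHz_nat sgD. Qed.

Lemma inR_Xn n : H n -> inR H ('X^n : {poly K}).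
Proof. by move=> hn i; rewrite coefXn; have [->|] := eqVneq i n; rewrite ?eqxx. Qed.

Lemma inR_XnP n : inR H ('X^n : {poly K}) -> H n.
Proof. by apply; rewrite coefXn eqxx oner_eq0. Qed.

Lemma inR_C (c : K) : inR H c%:P.
Proof. by move=> i; rewrite coefC; have [->|] := eqVneq i 0%N; rewrite ?eqxx // sg0. Qed.

Lemma inR_M (p q : {poly K}) : inR H p -> inR H q -> inR H (p * q).
Proof.
move=> hp hq k /coefM_neq0 [j [le pj qj]].
by rewrite -(subnKC le); apply: sgD; [apply: hp | apply: hq].
Qed.

End NumericalSemigroup.

Section GradedIdeal.
Context {K : fieldType} {H : pred nat} {I : {poly K} -> Prop}.
Hypotheses (hsg : numerical_semigroup H) (hI : graded_ideal H I).

Lemma graded_idealE f : I f <-> inR H f /\ forall n, f`_n != 0 -> I 'X^n.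
Proof.
case: hI => hR h0 hD hM hG; split.
  move=> hf; split=> [|n nz]; first exact: hR.
  have := hM _ _ (inR_C hsg (f`_n)^-1) (hG f n hf).
  by rewrite mul_polyC scalerA mulVf // scale1r.
move=> [hf hn]; rewrite -[f]coefK poly_def.
apply: (big_ind I) => // i _; have [->|nz] := eqVneq f`_i 0; first by rewrite scale0r.
by rewrite -mul_polyC; apply: hM; [apply: inR_C | apply: hn].
Qed.

Lemma graded_ideal_XnM n f : H n -> I f -> I ('X^n * f).
Proof. by case: hI => _ _ _ hM _ hn; apply: hM; apply: inR_Xn. Qed.

Lemma quot_deg_nonzeroE m : quot_deg_nonzero H I m <-> H m /\ ~ I 'X^m.
Proof.
split=> [[f [hf ef hnf]] | [hm hnX]].
  have fm : f`_m != 0 by apply/eqP => f0; apply: hnf; rewrite ef f0 scale0r; case: hI.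
  split=> [|hX]; first exact: hf.
  by apply: hnf; rewrite ef -mul_polyC; case: hI => _ _ _ hM _; apply: hM; first exact: inR_C.
by exists 'X^m; split; [exact: inR_Xn | rewrite coefXn eqxx scale1r |].
Qed.

Lemma a_quotE b : a_quot H I b <->
  [/\ 0 <= b, H `|b|%N, ~ I 'X^`|b|%N & forall m, H m -> ~ I 'X^m -> m%:Z <= b].
Proof.
split=> [[hb /quot_deg_nonzeroE [hbH hnb] hmax] | [hb hbH hnb hmax]].
  by split=> // m hm hnm; apply: hmax; apply/quot_deg_nonzeroE.
split=> // [|n /quot_deg_nonzeroE [hn hnn]]; first exact/quot_deg_nonzeroE.
exact: hmax.
Qed.

Lemma graded_XnBZ_coef f n c : ~ I 'X^n -> I ('X^n - c *: f) ->
  [/\ c != 0, f`_n != 0 & forall k, k != n -> c * f`_k != 0 -> I 'X^k].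
Proof.
move=> hnn /graded_idealE [_ hmon].
have cfn : c * f`_n = 1.
  apply/eqP; apply: contraT => ne; case: hnn; apply: hmon.
  by rewrite coefB coefZ coefXn eqxx subr_eq0 eq_sym.
have /andP [c0 fn0] : (c != 0) && (f`_n != 0).
  by rewrite -negb_or -mulf_eq0 cfn oner_neq0.
split=> // k ne nz; apply: hmon.
by rewrite coefB coefZ coefXn (negPf ne) sub0r oppr_eq0.
Qed.

Lemma not_socle_Xn m : H m -> ~ socle H I 'X^m ->
  exists j, [/\ (m < j)%N, H (j - m)%N & ~ I 'X^j].
Proof.
move=> hm hns; apply: NNPP => none; apply: hns; split=> [|g [hg g0]].
  exact: inR_Xn.
apply/graded_idealE; split=> [|k]; first by apply: inR_M => //; apply: inR_Xn.
rewrite coefMXn; case: ltnP => [_|le nz]; first by rewrite eqxx.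
apply: NNPP => hnk; apply: none; exists k; split=> //; last exact: hg.
have : (k - m)%N != 0%N by apply: contraNneq nz => ->; rewrite g0.
by rewrite subn_eq0 -ltnNge.
Qed.

Lemma socle_Xn m : H m -> (forall k, (m < k)%N -> H k -> I 'X^k) -> socle H I 'X^m.
Proof.
move=> hm above; apply: NNPP => /(not_socle_Xn _ hm) [j [lt hj hnj]].
by apply/hnj/above => //; rewrite -(subnKC (ltnW lt)) sgD.
Qed.

End GradedIdeal.

(* [R :_R t^d = R ∩ t^(-d) R] inside [k[t]]. *)
Definition colon_ideal {K : fieldType} (H : pred nat) (d : int) (f : {poly K}) : Prop :=
  inR H f /\ forall n, f`_n != 0 -> inHz H (n%:Z + d).

Lemma dpos_dneg_nat (e : nat) : dpos e%:Z = e /\ dneg e%:Z = 0%N.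
Proof. by []. Qed.

Lemma dpos_dneg_opp_nat (e : nat) : dpos (- e%:Z) = 0%N /\ dneg (- e%:Z) = e.
Proof. by case: e. Qed.

Lemma shift_ideal_nat {K : fieldType} (S : {poly K} -> Prop) (e : nat) g :
  shift_ideal S e%:Z g <-> exists2 f, S f & g = 'X^e * f.
Proof.
rewrite /shift_ideal; have [-> ->] := dpos_dneg_nat e; rewrite expr0.
by split=> [[f [hf]] | [f hf ->]]; [rewrite mul1r => ->; exists f | exists f; rewrite mul1r].
Qed.

Lemma shift_ideal_opp_nat {K : fieldType} (S : {poly K} -> Prop) (e : nat) g :
  shift_ideal S (- e%:Z) g <-> S ('X^e * g).
Proof.
rewrite /shift_ideal.
have [-> ->] := dpos_dneg_opp_nat e.
rewrite expr0; split=> [[f [hf ->]] | hg]; first by rewrite mul1r.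
by exists ('X^e * g); rewrite mul1r.
Qed.

Section ColonIdeal.
Context {K : fieldType} {H : pred nat}.
Hypothesis hsg : numerical_semigroup H.

Lemma colon_ideal_XnE d n : colon_ideal H d ('X^n : {poly K}) <-> H n /\ inHz H (n%:Z + d).
Proof.
split=> [[hn hnd] | [hn hnd]].
  by split; [exact: (inR_XnP _ hn) | apply: hnd; rewrite coefXn eqxx oner_eq0].
split=> [|i]; first exact: inR_Xn.
by rewrite coefXn; have [->|] := eqVneq i n; rewrite ?eqxx.
Qed.

Lemma colon_ideal_graded d : graded_ideal H (colon_ideal H d : {poly K} -> Prop).
Proof.
split.
- by move=> f [].
- by split=> i; rewrite coef0 eqxx.
- move=> f g [hf1 hf2] [hg1 hg2]; split=> i /coefD_neq0 /orP [] nz;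
    by [apply: hf1 | apply: hg1 | apply: hf2 | apply: hg2].
- move=> r f hr [hf1 hf2]; split; first exact: inR_M.
  move=> k /coefM_neq0 [j [le rj fkj]].
  have -> : k%:Z + d = j%:Z + ((k - j)%N%:Z + d) by lia.
  by apply: (inHzD hsg); [apply: hr | apply: hf2].
- move=> f n [hf1 hf2]; split=> i; rewrite coefZ coefXn;
    have [->|] := eqVneq i n; rewrite ?mulr0 ?eqxx // mulr1; [exact: hf1 | exact: hf2].
Qed.

Lemma colon_ideal_XnM (e : nat) (f : {poly K}) :
  colon_ideal H (- e%:Z) ('X^e * f) <-> colon_ideal H e%:Z f.
Proof.
have coefE n : ('X^e * f)`_(n + e) = f`_n by rewrite coefXnM ltnNge leq_addl addnK.
split=> [[h1 h2] | [h1 h2]].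
  split=> n nz; rewrite -coefE in nz.
    by have := h2 _ nz; have -> : (n + e)%N%:Z + - e%:Z = n%:Z by lia.
  by have := h1 _ nz; rewrite -inHz_nat; have -> : (n + e)%N%:Z = n%:Z + e%:Z by lia.
split=> k; rewrite coefXnM; case: ltnP => [_|le nz]; rewrite ?eqxx //.
  by have := h2 _ nz; rewrite -inHz_nat; have -> : (k - e)%N%:Z + e%:Z = k%:Z by lia.
by have := h1 _ nz; rewrite -inHz_nat; have -> : (k - e)%N%:Z = k%:Z + - e%:Z by lia.
Qed.

Lemma colon_ideal_opp_drop_poly (e : nat) (g : {poly K}) :
  colon_ideal H (- e%:Z) g -> 'X^e * drop_poly e g = g.
Proof.
move=> [_ hg]; apply: Xn_drop_poly => i lt; apply/eqP; apply: contraTT lt => nz.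
by have := inHz_ge0 _ (hg _ nz); lia.
Qed.

Lemma shift_colon_ideal d :
  shift_ideal (colon_ideal H d : {poly K} -> Prop) d = colon_ideal H (- d).
Proof.
apply: functional_extensionality => g; apply: propositional_extensionality.
have [e [-> | ->]] : exists e : nat, d = e%:Z \/ d = - e%:Z by exists `|d|%N; lia.
  rewrite shift_ideal_nat; split=> [[f hf ->] | hg]; first exact: (colon_ideal_XnM e f).2.
  exists (drop_poly e g); last by rewrite colon_ideal_opp_drop_poly.
  by apply: (colon_ideal_XnM e _).1; rewrite colon_ideal_opp_drop_poly.
by rewrite shift_ideal_opp_nat opprK; exact: colon_ideal_XnM.
Qed.

Lemma colon_ideal_shift_poly d (f : {poly K}) : colon_ideal H d f ->
  exists g : {poly K}, 'X^(dneg d) * g = 'X^(dpos d) * f.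
Proof.
have [e [-> | ->]] : exists e : nat, d = e%:Z \/ d = - e%:Z by exists `|d|%N; lia.
  by move=> _; exists ('X^e * f); have [-> ->] := dpos_dneg_nat e; rewrite expr0 mul1r.
move=> hf; exists (drop_poly e f); have [-> ->] := dpos_dneg_opp_nat e.
by rewrite expr0 mul1r colon_ideal_opp_drop_poly.
Qed.

Lemma colon_ideal_principal (e : nat) : H e ->
  generated_by H (colon_ideal H (- e%:Z) : {poly K} -> Prop) [:: 'X^e].
Proof.
move=> he f; split=> [hf | [rs [hrs ->]]]; last first.
  rewrite big_ord1 /=; case: (colon_ideal_graded (- e%:Z)) => _ _ _ hM _.
  apply: hM; first exact: hrs.
  by apply: (colon_ideal_XnE _ _).2; rewrite addrN; split; [exact: he | exact: sg0].
exists (fun=> drop_poly e f); split=> [_|].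
  have := (colon_ideal_XnM e (drop_poly e f)).1.
  by rewrite colon_ideal_opp_drop_poly // => /(_ hf) [].
by rewrite big_ord1 /= mulrC colon_ideal_opp_drop_poly.
Qed.

Lemma mu_ge2_colon_ideal_opp d :
  mu_ge H (colon_ideal H d : {poly K} -> Prop) 2 -> ~~ inHz H (- d).
Proof.
move=> hmu; apply/negP => /inHzP [e ed he].
have /hmu // : generated_by H (colon_ideal H d : {poly K} -> Prop) [:: 'X^e].
have -> : d = - e%:Z by lia.
exact: colon_ideal_principal.
Qed.

End ColonIdeal.

Section SymmetricSemigroup.
Context {K : fieldType} {H : pred nat} {a : int}.
Hypotheses (hsg : numerical_semigroup H) (ha : a_inv_R H a) (hsym : symmetric_sg H a).

Lemma colon_ideal_Xn_large d :
  exists N, forall n, (N <= n)%N -> colon_ideal H d ('X^n : {poly K}).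
Proof.
case: hsg => _ _ [N0 hN0]; exists (N0 + `|a - d| + 1)%N => n le.
by apply/(colon_ideal_XnE _ _).2; split; [apply: hN0 | apply: ha.2]; lia.
Qed.

Lemma inHz_sub_notin d : ~~ inHz H d -> inHz H (a - d).
Proof. by move=> hd; rewrite hsym opprB addrC subrK. Qed.

Lemma a_quot_colon_ideal d : ~~ inHz H d ->
  a_quot H (colon_ideal H d : {poly K} -> Prop) (a - d).
Proof.
move=> /inHz_sub_notin /inHzP [b eb hb].
apply/(a_quotE hsg (colon_ideal_graded hsg d)); rewrite eb; split=> //.
  move/(colon_ideal_XnE _ _).1 => [_].
  have -> : b%:Z + d = a by lia.
  by apply/negP; exact: ha.1.
move=> m hm hnm; have : ~~ inHz H (m%:Z + d).
  by apply/negP => hmd; apply/hnm/(colon_ideal_XnE _ _).2.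
by rewrite hsym negbK => /inHz_ge0; lia.
Qed.

(* A socle element [g] of [R ∩ t^(-d) R] can only fail the membership test in the degree
   [i] with [i + d = a]: otherwise [a - i - d] would be a positive element [j] of [H], and
   [t^j g] would have a coefficient in degree [a - d]. *)
Lemma socle_colon_ideal_coef d (g : {poly K}) i : socle H (colon_ideal H d) g ->
  g`_i != 0 -> i%:Z + d != a -> inHz H (i%:Z + d).
Proof.
move=> [hg hsoc] nz ne; rewrite hsym; apply/negP => /inHzP [j ej hj].
have j0 : j != 0%N by apply: contraNneq ne => j0; lia.
have /hsoc [_ /(_ (j + i)%N)] : in_max_ideal H ('X^j : {poly K}).
  by split; [exact: inR_Xn | rewrite coefXn eq_sym (negPf j0)].
rewrite coefXnM ltnNge leq_addr addKn => /(_ nz).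
have -> : (j + i)%N%:Z + d = a by lia.
by apply/negP; exact: ha.1.
Qed.

Lemma gorenstein_colon_ideal d : ~~ inHz H d ->
  gorenstein_quot H (colon_ideal H d : {poly K} -> Prop).
Proof.
move=> /inHz_sub_notin /inHzP [b eb hb].
have hgr : graded_ideal H (colon_ideal H d : {poly K} -> Prop) := colon_ideal_graded hsg d.
split; first by have [N hN] := colon_ideal_Xn_large d; exists N => n /hN.
exists 'X^b; split.
- apply: (socle_Xn hsg hgr b) => // k lt hk.
  by apply: (colon_ideal_XnE _ _).2; split=> //; apply: ha.2; lia.
- move/(colon_ideal_XnE _ _).1 => [_].
  have -> : b%:Z + d = a by lia.
  by apply/negP; exact: ha.1.
- move=> g hg; exists g`_b; split=> i; rewrite coefB coefZ coefXn;
    have [->|ne] := eqVneq i b; rewrite ?mulr1 ?subrr ?eqxx // mulr0 subr0 => nz.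
    exact: hg.1.
  by apply: (socle_colon_ideal_coef _ _ _ hg nz); lia.
Qed.

Lemma colon_ideal_not_principal d (g : {poly K}) : ~~ inHz H d -> ~~ inHz H (- d) ->
  ~ generated_by H (colon_ideal H d) [:: g].
Proof.
move=> hd hnd hgen.
have [hgR hgd] : colon_ideal H d g.
  apply/hgen; exists (fun=> 1); split=> [_|]; first exact: (inR_C hsg 1).
  by rewrite big_ord1 mul1r.
have [e [g1 [eg g10]]] : exists e g1, g = 'X^e * g1 /\ g1`_0 != 0.
  apply: poly_XnM_decomp; apply/eqP => g0; have [N hN] := colon_ideal_Xn_large d.
  have /hgen [rs [_]] := hN N (leqnn N).
  by rewrite big_ord1 g0 mulr0 => /eqP; rewrite (negPf (Xn_neq0 N)).
have ge : g`_e != 0 by rewrite eg coefXnM ltnn subnn.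
have hed := hgd e ge.
have e0 : e != 0%N by apply: contraNneq hd => e0; move: hed; rewrite e0 add0r.
have ed : e%:Z + d != 0.
  by apply: contraNneq hnd => ed; rewrite (_ : - d = e%:Z); [exact: hgR | lia].
have /inHzP [m em hm] : inHz H (a + e%:Z) by apply: ha.2; lia.
have /hgen [rs [hrs]] : colon_ideal H d ('X^m : {poly K}).
  by apply/(colon_ideal_XnE _ _).2; split=> //; apply: ha.2; have := inHz_ge0 _ hed; lia.
rewrite big_ord1 /= eg => /Xn_eq_mulXnM /(_ g10) [le /(hrs ord0) hma].
apply: (negP ha.1); have -> : a = (m - e)%N%:Z by lia.
exact: hma.
Qed.

Lemma mu_ge2_colon_ideal d : ~~ inHz H d -> ~~ inHz H (- d) ->
  mu_ge H (colon_ideal H d : {poly K} -> Prop) 2.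
Proof.
move=> hd hnd [|g [|g' gs]] // hgen; last by case: (colon_ideal_not_principal _ _ hd hnd hgen).
have [N /(_ N (leqnn N)) /hgen [rs [_]]] := colon_ideal_Xn_large d.
by rewrite big_ord0 => /eqP; rewrite (negPf (Xn_neq0 N)).
Qed.

End SymmetricSemigroup.

Section GorensteinQuotient.
Context {K : fieldType} {H : pred nat} {a : int} {I : {poly K} -> Prop} {b : int}.
Hypotheses (hsg : numerical_semigroup H) (hsym : symmetric_sg H a).
Hypotheses (hgr : graded_ideal H I) (hgor : gorenstein_quot H I) (hab : a_quot H I b).

(* Both [t^m] and [t^b] are congruent modulo [I] to nonzero multiples of the socle
   generator; comparing coefficients in degree [b] forces [m = b]. *)
Lemma socle_Xn_deg m : socle H I 'X^m -> ~ I 'X^m -> m = `|b|%N.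
Proof.
move=> hsm hnm; have [_ _ hnb hbound] := (a_quotE hsg hgr b).1 hab.
have hsb : socle H I 'X^`|b|.
  apply: (socle_Xn hsg hgr) => [|k lt hk]; first by have [] := (a_quotE hsg hgr b).1 hab.
  by apply: NNPP => hnk; have := hbound k hk hnk; lia.
case: hgor => _ [f [_ _ huniq]].
have [c /(graded_XnBZ_coef hsg hgr _ _ _ hnm) [c0 _ hcm]] := huniq _ hsm.
have [c' /(graded_XnBZ_coef hsg hgr _ _ _ hnb) [_ fb _]] := huniq _ hsb.
apply/eqP; apply: contraT => ne; case: hnb; apply: hcm; first by rewrite eq_sym.
exact: mulf_neq0.
Qed.

Lemma notin_ideal_Xn_sub m : H m -> ~ I 'X^m -> H (`|b| - m)%N.
Proof.
have [_ _ _ hbound] := (a_quotE hsg hgr b).1 hab.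
have [k lek] : exists k, (`|b| - m <= k)%N by exists (`|b| - m)%N.
elim: k m lek => [|k IH] m lek hm hnm;
  have [hs|/(not_socle_Xn hsg hgr _ hm) [j [ltmj hjm hnj]]] := classic (socle H I 'X^m);
  try by rewrite (socle_Xn_deg _ hs hnm) subnn; exact: sg0.
  have hj : H j by rewrite -(subnKC (ltnW ltmj)) sgD.
  by have := hbound j hj hnj; lia.
have hj : H j by rewrite -(subnKC (ltnW ltmj)) sgD.
have lejb := hbound j hj hnj.
have -> : (`|b| - m = (`|b| - j) + (j - m))%N by lia.
by rewrite sgD // IH //; lia.
Qed.

Lemma ideal_XnE n : I 'X^n <-> H n /\ inHz H (n%:Z + (a - b)).
Proof.
have [hb _ hnb hbound] := (a_quotE hsg hgr b).1 hab.
split=> [hn | [hn hnd]].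
  have hnH : H n by apply: (inR_XnP n); case: hgr => hR _ _ _ _; exact: hR.
  split=> //; rewrite hsym; apply/negP => /inHzP [j ej hj]; apply: hnb.
  have -> : `|b|%N = (j + n)%N by lia.
  by rewrite exprD; exact: (graded_ideal_XnM hgr j _ hj hn).
apply: NNPP => hnI; have lenb := hbound n hn hnI.
move: hnd; rewrite hsym; have -> : a - (n%:Z + (a - b)) = (`|b| - n)%N%:Z by lia.
by rewrite inHz_nat notin_ideal_Xn_sub.
Qed.

Lemma gorenstein_ideal_colonE : I = colon_ideal H (a - b).
Proof.
apply: functional_extensionality => f; apply: propositional_extensionality.
rewrite (graded_idealE hsg hgr); split=> [[hf hn] | [hf hn]]; split=> // n nz.
  by case/ideal_XnE: (hn n nz).
by apply/ideal_XnE; split; [exact: hf | exact: hn].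
Qed.

End GorensteinQuotient.

Theorem corollary4p1 (K : fieldType) (H : pred nat) (a : int)
  (I : {poly K} -> Prop) (b : int) :
  numerical_semigroup H -> a_inv_R H a -> symmetric_sg H a ->
  in_XR H I -> a_quot H I b ->
  [/\ (* t^(a-b) I is contained in k[t] (hence, by in_XR below, in R) *)
      (forall f, I f -> exists g : {poly K}, 'X^(dneg (a - b)) * g = 'X^(dpos (a - b)) * f),
      (* (1) *)
      [/\ in_XR H (shift_ideal I (a - b)),
          a_quot H (shift_ideal I (a - b)) (2 * a - b),
          (b < a -> a < 2 * a - b) & (a < b -> 2 * a - b < a)],
      (* (2) *)
      [/\ inHz H b, a != b & ~~ inHz H (a - b)],
      (* (3) *)
      (b < a -> 0 <= a - b /\ ~~ inHz H (a - b))
    & (* (4) *)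
      (a < b -> 0 <= b - a /\ ~~ inHz H (b - a))].
Proof.
move=> hsg ha hsym [hgr hgor hmu] hab.
have [hb hbH _ _] := (a_quotE hsg hgr b).1 hab.
have hbz : inHz H b by rewrite /inHz hb.
have hd : ~~ inHz H (a - b).
  by apply: contra ha.1 => hd; rewrite -(subrK b a) inHzD.
have nab : a != b by apply: contraNneq hd => ->; rewrite subrr; exact: sg0.
have eI := gorenstein_ideal_colonE hsg hsym hgr hgor hab; subst I.
have hnd := mu_ge2_colon_ideal_opp hsg _ hmu.
rewrite shift_colon_ideal.
split.
- exact: colon_ideal_shift_poly.
- split; [split | | lia | lia].
  + exact: colon_ideal_graded.
  + exact: (gorenstein_colon_ideal hsg ha hsym _ hnd).
  + by apply: (mu_ge2_colon_ideal hsg ha _ hnd); rewrite opprK.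
  + rewrite (_ : 2 * a - b = a - - (a - b)); last by lia.
    exact: (a_quot_colon_ideal hsg ha hsym _ hnd).
- by split.
- by move=> lt; split; [lia | exact: hd].
- by move=> lt; split; [lia | rewrite -opprB].
Qed.
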